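(* Consider the Que Sera Consensus (QSC) protocol, as described in the context, running on $n$ nodes atop a full-spread threshold synchronous broadcast primitive $\mathrm{TSB}(t_r,t_b,n)$ with $t_r>0$ and $t_b>0$. If a consensus round starting at time-step $s$ has initial history $h_{s_i}$ on node $i$, then for every earlier consensus round, starting at a time-step $s'<s$, there exists some node $j$ whose initial history $h_{s'_j}$ in that earlier round is a strict prefix of $h_{s_i}$.
   Context: Threshold synchronous broadcast (TSB). A group of $n$ nodes, numbered $1,\dots,n$, operates in integer logical time-steps $0,1,2,\dots$. Nodes may fail only by crashing permanently. In each time-step every non-failed node calls $\mathrm{Broadcast}(m)$ exactly once; the call returns a pair $(R,B)$ of message sets. A primitive provides $\mathrm{TSB}(t_r,t_b,t_s)$ if: (lock-step synchrony) a call to $\mathrm{Broadcast}(m)$ at step $s$ returns at step $s+1$ unless the node fails before reaching step $s+1$; (receive threshold) if node $i$'s call at step $s$ returns $(R,B)$, there is $N_R\subseteq\{1,\dots,n\}$ with $|N_R|\ge t_r$ such that $R$ is exactly the set of messages broadcast by the nodes in $N_R$ during step $s$; (broadcast threshold) there is $N_B\subseteq\{1,\dots,n\}$ with $|N_B|\ge t_b$ such that $B$ is exactly the set of messages broadcast by the nodes in $N_B$ during step $s$; (spread threshold) if some node's call at step $s$ returns $(R,B)$ with $m'\in B$, then there are at least $t_s$ nodes whose receive sets $R$ returned from their step-$s$ calls include $m'$ (a node that fails before completing step $s$ counts if it would have received $m'$ had it not failed). The case $t_s=n$ is called full-spread. Histories and priorities. A proposal is a triple $\langle i,m,r\rangle$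 (node, message, numeric priority). A history is a finite list of proposals; $[]$ is the empty history and $\|$ is list concatenation. The priority of a nonempty history is the priority $r$ of its last proposal. A history $h$ is best in a set $H$ if $h\in H$ and no $h'\in H$ has strictly greater priority; $h$ is uniquely best in $H$ if $h\in H$ and no other $h'\ne h$ in $H$ has priority greater than or equal to that of $h$. QSC protocol. It is parameterized by functions ChooseMessage (returns some message, possibly empty), Deliver (passes a history to the application), RandomValue (returns a value drawn using node-private randomness from a fixed nontrivial distribution, the same on every node, with at least two values of nonzero probability), and Broadcast (the TSB primitive). Each node $i$ runs: set $h\leftarrow[]$; then forever repeat a consensus round: $m\leftarrow\mathrm{ChooseMessage}()$; $r\leftarrow\mathrm{RandomValue}()$; $h'\leftarrow h\,\|\,[\langle i,m,r\rangle]$; $(R',B')\leftarrow\mathrm{Broadcast}(h')$; $h''\leftarrow$ any best history in $B'$; $(R'',B'')\leftarrow\mathrm{Broadcast}(h'')$; $h\leftarrow$ any best history in $R''$; if $h\in B''$ and $h$ is uniquely best in $R'$, call $\mathrm{Deliver}(h)$. Each round thus occupies two time-steps; the value of $h$ at the start of a round is the node's initial history for that round, and the value of $h$ assigned from $R''$ is its resulting history for that round. *)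

From mathcomp Require Import all_boot all_order.
Set Implicit Arguments. Unset Strict Implicit. Unset Printing Implicit Defensive.
Import Order.TTheory.
Local Open Scope order_scope.

Section QSC.
(* n nodes, indexed by 'I_n (node k+1 of the paper is ordinal k);
   M = application messages; Pr = numeric priorities (any totally ordered type). *)
Variables (n : nat) (M : eqType) (d : Order.disp_t) (Pr : orderType d).

Definition proposal : eqType := ('I_n * M * Pr)%type.
Definition history : eqType := seq proposal.

Definition prio (h : history) : option Pr :=
  match h with [::] => None | p :: h' => Some (last p h').2 end.

Definition prio_gt (h1 h2 : history) : bool :=
  match prio h1, prio h2 with Some a, Some b => b < a | _, _ => false end.
Definition prio_ge (h1 h2 : history) : bool :=
  match prio h1, prio h2 with Some a, Some b => b <= a | _, _ => false end.

(* h is best in H (H a set of histories, given as a sequence used as a set). *)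
Definition best (H : seq history) (h : history) : Prop :=
  h \in H /\ forall h', h' \in H -> ~~ prio_gt h' h.
Definition uniquely_best (H : seq history) (h : history) : Prop :=
  h \in H /\ forall h', h' \in H -> h' != h -> ~~ prio_ge h' h.

(* An execution of the protocol: time-steps are natural numbers.
   - alive s i    : node i has not failed before reaching step s, i.e. it calls
                    Broadcast at step s (and, for s > 0, its call of step s-1 returned);
   - bcast s i    : the message (a history) node i broadcasts at step s;
   - recvR s i, recvB s i : the sets R and B returned at step s+1 by node i's call
                    of step s (meaningful when alive s.+1 i); for a node that
                    failed, recvR s i is the receive set it would have had
                    (used only by the spread threshold);
   - hinit k i    : node i's initial history for consensus round k
                    (round k occupies steps 2k and 2k+1);
   - cmsg k i, rnd k i : values returned by ChooseMessage / RandomValue in round k;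
   - hmid k i     : the history h'' chosen in round k. *)
Record execution := Execution {
  alive : nat -> 'I_n -> bool;
  bcast : nat -> 'I_n -> history;
  recvR : nat -> 'I_n -> seq history;
  recvB : nat -> 'I_n -> seq history;
  hinit : nat -> 'I_n -> history;
  cmsg  : nat -> 'I_n -> M;
  rnd   : nat -> 'I_n -> Pr;
  hmid  : nat -> 'I_n -> history
}.

Definition exactly_from (E : execution) (s : nat) (N : {set 'I_n})
    (X : seq history) : Prop :=
  (forall j, j \in N -> alive E s j) /\
  (forall h, h \in X <-> exists2 j, j \in N & h = bcast E s j).

(* Crash failures are permanent, and the primitive provides TSB(t_r, t_b, t_s). *)
Definition TSB (t_r t_b t_s : nat) (E : execution) : Prop :=
  (forall s i, alive E s.+1 i -> alive E s i) /\
  (forall s i, alive E s.+1 i ->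
     exists2 NR : {set 'I_n}, (t_r <= #|NR|)%N & exactly_from E s NR (recvR E s i)) /\
  (forall s i, alive E s.+1 i ->
     exists2 NB : {set 'I_n}, (t_b <= #|NB|)%N & exactly_from E s NB (recvB E s i)) /\
  (* spread threshold (failed nodes counted through their would-be receive sets) *)
  (forall s i h, alive E s.+1 i -> h \in recvB E s i ->
     (t_s <= #|[set j | h \in recvR E s j]|)%N).

Definition runs_QSC (E : execution) : Prop :=
  (forall i, hinit E 0 i = [::]) /\
  forall i k,
  (alive E k.*2 i ->
     bcast E k.*2 i = rcons (hinit E k i) (i, cmsg E k i, rnd E k i)) /\
  (alive E k.*2.+1 i ->
     best (recvB E k.*2 i) (hmid E k i) /\ bcast E k.*2.+1 i = hmid E k i) /\
  (alive E k.*2.+2 i -> best (recvR E k.*2.+1 i) (hinit E k.+1 i)).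

Definition strict_prefix (a b : history) : bool :=
  prefix a b && (size a < size b)%N.

End QSC.

From mathcomp Require Import all_boot all_order.

Set Implicit Arguments.
Unset Strict Implicit.
Unset Printing Implicit Defensive.

(** Every history a node adopts at the end of a round was chosen, as a best
    element of its receive set, among the histories relayed in the second step
    of that round; each of those was in turn a history broadcast in the first
    step, i.e. the initial history of some live node extended by one proposal.
    So each initial history strictly extends an initial history of the previous
    round, and induction on the number of rounds gives the claim. *)

Section QSCHistories.

Variables (n : nat) (M : eqType) (d : Order.disp_t) (Pr : orderType d).
Implicit Types (h : history n M Pr) (p : proposal n M Pr).

Lemma strict_prefix_rcons h p : strict_prefix h (rcons h p).
Proof. by rewrite /strict_prefix prefix_rcons size_rcons ltnSn. Qed.

Lemma strict_prefix_trans : transitive (@strict_prefix n M d Pr).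
Proof.
move=> h2 h1 h3 /andP[pre12 lt12] /andP[pre23 lt23].
by rewrite /strict_prefix (prefix_trans pre12 pre23) (ltn_trans lt12 lt23).
Qed.

Variables (t_r t_b : nat) (E : execution n M Pr).
Hypothesis tsbE : TSB t_r t_b n E.
Hypothesis qscE : runs_QSC E.

Lemma exactly_fromP s N X h :
  exactly_from E s N X -> h \in X -> exists2 j, alive E s j & h = bcast E s j.
Proof. by move=> [aliveN memX] /memX[j /aliveN alive_j ->]; exists j. Qed.

Lemma hinit_succ_hmid k i :
  alive E k.*2.+2 i -> exists2 j, alive E k.*2.+1 j & hinit E k.+1 i = hmid E k j.
Proof.
move=> alive_i; have [_ [_ best_end]] := qscE.2 i k.
have [NR _ fromR] := tsbE.2.1 _ _ alive_i.
have [j alive_j ->] := exactly_fromP fromR (best_end alive_i).1.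
have [_ [mid _]] := qscE.2 j k.
by exists j => //; rewrite (mid alive_j).2.
Qed.

Lemma hmid_rcons_proposal k j :
  alive E k.*2.+1 j -> exists2 j', alive E k.*2 j' &
    hmid E k j = rcons (hinit E k j') (j', cmsg E k j', rnd E k j').
Proof.
move=> alive_j; have [_ [mid _]] := qscE.2 j k.
have [NB _ fromB] := tsbE.2.2.1 _ _ alive_j.
have [j' alive_j' ->] := exactly_fromP fromB (mid alive_j).1.1.
by exists j' => //; rewrite (qscE.2 j' k).1.
Qed.

Lemma hinit_succ_extends k i :
  alive E k.+1.*2 i ->
  exists2 j, alive E k.*2 j & strict_prefix (hinit E k j) (hinit E k.+1 i).
Proof.
rewrite doubleS => /hinit_succ_hmid[j /hmid_rcons_proposal[j' alive_j' mid_j] ->].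
by exists j'; rewrite // mid_j strict_prefix_rcons.
Qed.

End QSCHistories.

Theorem lemma2 (n : nat) (M : eqType) (d : Order.disp_t) (Pr : orderType d)
    (t_r t_b : nat) (E : execution n M Pr) :
  0 < t_r -> 0 < t_b ->
  TSB t_r t_b n E -> runs_QSC E ->
  forall (k : nat) (i : 'I_n), alive E k.*2 i ->
  forall k' : nat, k' < k ->
  exists j : 'I_n, alive E k'.*2 j /\ strict_prefix (hinit E k' j) (hinit E k i).
Proof.
move=> _ _ tsbE qscE; elim=> [//|k IH] i alive_i k'.
have [j alive_j pre_j] := hinit_succ_extends tsbE qscE alive_i.
rewrite ltnS leq_eqVlt => /predU1P[-> | lt_k'k]; first by exists j.
have [j' [alive_j' pre_j']] := IH j alive_j k' lt_k'k.
by exists j'; split; last exact: strict_prefix_trans pre_j.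
Qed.
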